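(* Let $a$ and $q \geq 1$ be integers with $\gcd(a,q) = 1$. Let $n, k, L$ be positive integers and $N \geq 1$ a real number such that $$L \leq N^n, \qquad q \leq L N^k, \qquad 2^{n+k+1} < N.$$ Let $\mathcal{P}$ be the set of primes in $[N/2, N]$ not dividing $q$. Then $$\sum_{l = 1}^{L} \left| \sum_{q_1 \in \mathcal{P}} \cdots \sum_{q_n \in \mathcal{P}} e\!\left(\frac{l\, q_1 \cdots q_n\, a}{q}\right) \right| \leq C\, 2^{n+k} n^n \max\!\left(L N^{n/2 + k/2},\ \frac{L N^n}{q^{1/2}}\right),$$ where $C>0$ is an absolute constant.
   Context: $e(x) := e^{2\pi i x}$. *)

From Stdlib Require Import Reals Lra Lia ZArith Znumtheory List.
Open Scope R_scope.

(* e(x) = exp(2 pi i x), represented by its real and imaginary parts. *)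
Definition e_re (x : R) : R := cos (2 * PI * x).
Definition e_im (x : R) : R := sin (2 * PI * x).

Definition abs_sum_e (xs : list R) : R :=
  let re := fold_right Rplus 0 (map e_re xs) in
  let im := fold_right Rplus 0 (map e_im xs) in
  sqrt (re * re + im * im).

Definition sumR (xs : list R) : R := fold_right Rplus 0 xs.

(* The set P of primes p with N/2 <= p <= N and p not dividing q,
   listed without repetition (candidates 0 .. up N - 1 cover [N/2, N]). *)
Definition primesP (N : R) (q : Z) : list Z :=
  filter
    (fun p : Z =>
       (if prime_dec p then true else false) &&
       (if Rle_dec (N / 2) (IZR p) then true else false) &&
       (if Rle_dec (IZR p) N then true else false) &&
       negb (Z.eqb (Z.rem q p) 0))%bool
    (map Z.of_nat (seq 0 (Z.to_nat (up N)))).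

Fixpoint tuples (s : list Z) (n : nat) : list (list Z) :=
  match n with
  | O => nil :: nil
  | S m => flat_map (fun x => map (cons x) (tuples s m)) s
  end.

Definition prodZ (t : list Z) : Z := fold_right Z.mul 1%Z t.

(* For each l pick a unit vector (u_l, v_l) realising |S_l| as a real part
   ([abs_sum_e_dual]).  If n <= k the trivial bound |S_l| <= |P|^n <= N^n suffices.
   Otherwise write n = k + s and split every n-tuple as x ++ y with |x| = k, |y| = s;
   then sum_l |S_l| = sum_y G(prod y), where G(w) is the twisted sum
   Re sum_{l, x} (u_l - i v_l) e(l prod(x) a w / q)  ([typeII_identity]).
   Cauchy-Schwarz in y and the fact that an integer below N^(n+k) has at most n+k
   prime factors >= N/2 ([few_large_prime_divisors], [sum_over_multiples_of_products])
   reduce matters to the mean square of G over complete periods modulo q, which by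
   orthogonality of additive characters ([mean_square_complete_periods]) is bounded by
   the number of pairs of coefficients congruent modulo q; as gcd(a, q) = 1 these are
   counted by [congruence_count]. *)

From Stdlib Require Import Reals Lra Lia ZArith Znumtheory List FinFun.
Open Scope R_scope.

Arguments sumR : simpl never.

Lemma sumR_nil : sumR nil = 0.
Proof. reflexivity. Qed.

Lemma sumR_cons x l : sumR (x :: l) = x + sumR l.
Proof. reflexivity. Qed.

Lemma sumR_app l1 l2 : sumR (l1 ++ l2) = sumR l1 + sumR l2.
Proof. induction l1 as [|x l1 IH]; cbn [app]; rewrite ?sumR_nil, ?sumR_cons, ?IH; ring. Qed.

Lemma sumR_plus {A} (f g : A -> R) l :
  sumR (map (fun x => f x + g x) l) = sumR (map f l) + sumR (map g l).
Proof. induction l as [|x l IH]; cbn [map]; rewrite ?sumR_nil, ?sumR_cons, ?IH; ring. Qed.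

Lemma sumR_scal {A} (c : R) (f : A -> R) l :
  sumR (map (fun x => c * f x) l) = c * sumR (map f l).
Proof. induction l as [|x l IH]; cbn [map]; rewrite ?sumR_nil, ?sumR_cons, ?IH; ring. Qed.

Lemma sumR_const {A} (c : R) (l : list A) : sumR (map (fun _ => c) l) = INR (length l) * c.
Proof.
  induction l as [|x l IH]; cbn [map length]; rewrite ?sumR_nil, ?sumR_cons, ?IH, ?S_INR;
    simpl; ring.
Qed.

Lemma sumR_le {A} (f g : A -> R) l :
  (forall x, In x l -> f x <= g x) -> sumR (map f l) <= sumR (map g l).
Proof.
  induction l as [|x l IH]; intros H; cbn [map]; rewrite ?sumR_nil, ?sumR_cons; [lra|].
  assert (f x <= g x) by (apply H; left; auto).
  assert (sumR (map f l) <= sumR (map g l)) by (apply IH; intros; apply H; right; auto).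
  lra.
Qed.

Lemma sumR_ext {A} (f g : A -> R) l :
  (forall x, In x l -> f x = g x) -> sumR (map f l) = sumR (map g l).
Proof. intros H; apply Rle_antisym; apply sumR_le; intros x Hx; rewrite (H x Hx); lra. Qed.

Lemma sumR_nonneg {A} (f : A -> R) l :
  (forall x, In x l -> 0 <= f x) -> 0 <= sumR (map f l).
Proof.
  intros H. apply Rle_trans with (sumR (map (fun _ => 0) l)).
  - rewrite sumR_const; lra.
  - now apply sumR_le.
Qed.

Lemma sumR_flat_map {A B} (F : B -> R) (g : A -> list B) l :
  sumR (map F (flat_map g l)) = sumR (map (fun x => sumR (map F (g x))) l).
Proof.
  induction l as [|x l IH]; cbn [flat_map map]; [reflexivity|].
  now rewrite map_app, sumR_app, sumR_cons, IH.
Qed.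

Lemma sumR_swap {A B} (F : A -> B -> R) l1 l2 :
  sumR (map (fun x => sumR (map (fun y => F x y) l2)) l1) =
  sumR (map (fun y => sumR (map (fun x => F x y) l1)) l2).
Proof.
  induction l1 as [|x l1 IH]; cbn [map].
  - rewrite sumR_nil, sumR_const; ring.
  - rewrite sumR_cons, IH, <- sumR_plus.
    apply sumR_ext; intros; now rewrite sumR_cons.
Qed.

Lemma sumR_mult {A B} (f : A -> R) (g : B -> R) l1 l2 :
  sumR (map f l1) * sumR (map g l2) =
  sumR (map (fun x => sumR (map (fun y => f x * g y) l2)) l1).
Proof.
  induction l1 as [|x l1 IH]; cbn [map]; rewrite ?sumR_nil, ?sumR_cons; [ring|].
  rewrite <- IH, sumR_scal. ring.
Qed.

Lemma cauchy_schwarz {A} (f : A -> R) l :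
  sumR (map f l) ^ 2 <= INR (length l) * sumR (map (fun x => f x ^ 2) l).
Proof.
  induction l as [|x l IH]; cbn [map length]; rewrite ?sumR_nil, ?sumR_cons, ?S_INR; [simpl; lra|].
  set (S := sumR (map f l)) in *. set (Q := sumR (map (fun x => f x ^ 2) l)) in *.
  set (n := INR (length l)) in *.
  assert (Hn : 0 <= n) by apply pos_INR.
  assert (HQ : 0 <= Q) by (apply sumR_nonneg; intros; nra).
  (* the increment 2 S f(x) is at most Q + n f(x)^2, since n (Q + n f^2 - 2 S f) >= (n f - S)^2 *)
  assert (Hcross : 2 * f x * S <= Q + n * f x ^ 2).
  { destruct (Req_dec n 0) as [H0|H0].
    - rewrite H0 in IH |- *. assert (S = 0) by nra. rewrite H. nra.
    - assert (0 < n) by lra. assert (0 <= (n * f x - S) ^ 2) by apply pow2_ge_0.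
      assert (n * (Q + n * f x ^ 2 - 2 * f x * S) >= (n * f x - S) ^ 2) by nra. nra. }
  nra.
Qed.

Definition indb (b : bool) : R := if b then 1 else 0.

Lemma indb_nonneg b : 0 <= indb b.
Proof. destruct b; simpl; lra. Qed.

Lemma indb_le1 b : indb b <= 1.
Proof. destruct b; simpl; lra. Qed.

Lemma sum_indb_length {A} (f : A -> bool) l :
  sumR (map (fun x => indb (f x)) l) = INR (length (filter f l)).
Proof.
  induction l as [|x l IH]; cbn [map filter]; [reflexivity|].
  rewrite sumR_cons, IH. destruct (f x); cbn [length]; rewrite ?S_INR; unfold indb; ring.
Qed.

Lemma sum_indb_atmost1 {A} (f : A -> bool) l :
  NoDup l -> (forall x y, In x l -> In y l -> f x = true -> f y = true -> x = y) ->
  sumR (map (fun x => indb (f x)) l) <= 1.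
Proof.
  intros Hnd Huniq. rewrite sum_indb_length.
  destruct (filter f l) as [|x [|y r]] eqn:E; cbn [length]; simpl; try lra.
  assert (Hx : In x (filter f l)) by (rewrite E; simpl; auto).
  assert (Hy : In y (filter f l)) by (rewrite E; simpl; auto).
  apply filter_In in Hx as [Hx Fx]. apply filter_In in Hy as [Hy Fy].
  assert (Hnd' : NoDup (filter f l)) by now apply NoDup_filter.
  rewrite E in Hnd'. inversion Hnd' as [|? ? Hnotin]. exfalso. apply Hnotin.
  rewrite (Huniq x y Hx Hy Fx Fy). simpl; auto.
Qed.

Lemma pick_sum (g : Z -> R) r x : NoDup r -> In x r ->
  sumR (map (fun z => g z * indb (Z.eqb x z)) r) = g x.
Proof.
  induction 1 as [|z r Hz Hr IH]; intros Hx; [destruct Hx|].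
  cbn [map]. rewrite sumR_cons. destruct (Z.eqb_spec x z) as [->|E].
  - rewrite (sumR_ext _ (fun _ => 0)), sumR_const; [simpl; ring|].
    intros w Hw. destruct (Z.eqb_spec z w); [subst; tauto|]. simpl; ring.
  - destruct Hx as [Hx|Hx]; [congruence|]. rewrite IH by auto. simpl; ring.
Qed.

Lemma sum_reindex_le {A} (As : list A) (phi : A -> Z) (r : list Z) (g : Z -> R) (R0 : R) :
  NoDup r -> (forall a, In a As -> In (phi a) r) -> (forall z, 0 <= g z) ->
  (forall z, In z r -> sumR (map (fun a => indb (Z.eqb (phi a) z)) As) <= R0) ->
  sumR (map (fun a => g (phi a)) As) <= R0 * sumR (map g r).
Proof.
  intros Hr Hin Hg Hfibre.
  assert (E : sumR (map (fun a => g (phi a)) As) =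
              sumR (map (fun z => g z * sumR (map (fun a => indb (Z.eqb (phi a) z)) As)) r)).
  { rewrite (sumR_ext _ (fun a => sumR (map (fun z => g z * indb (Z.eqb (phi a) z)) r)))
      by (intros a Ha; rewrite pick_sum; auto).
    rewrite sumR_swap. apply sumR_ext. intros z _. now rewrite sumR_scal. }
  rewrite E, <- sumR_scal. apply sumR_le. intros z Hz.
  specialize (Hfibre z Hz). specialize (Hg z). nra.
Qed.

Definition rng (M : nat) : list Z := map Z.of_nat (seq 1 M).

Lemma in_rng z M : In z (rng M) <-> (1 <= z <= Z.of_nat M)%Z.
Proof.
  unfold rng. rewrite in_map_iff. split.
  - intros [i [<- Hi]]. apply in_seq in Hi. lia.
  - intros H. exists (Z.to_nat z). split; [lia|]. apply in_seq. lia.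
Qed.

Lemma rng_NoDup M : NoDup (rng M).
Proof. unfold rng. apply Injective_map_NoDup; [intros x y; lia|apply seq_NoDup]. Qed.

Lemma rng_length M : length (rng M) = M.
Proof. unfold rng. now rewrite length_map, length_seq. Qed.

Lemma sum_rng_mono (g : Z -> R) (M1 M2 : nat) : (forall z, 0 <= g z) -> (M1 <= M2)%nat ->
  sumR (map g (rng M1)) <= sumR (map g (rng M2)).
Proof.
  intros Hg HM. replace M2 with (M1 + (M2 - M1))%nat by lia.
  unfold rng. rewrite seq_app, !map_app, sumR_app.
  assert (0 <= sumR (map g (map Z.of_nat (seq (1 + M1) (M2 - M1)))))
    by (apply sumR_nonneg; auto).
  lra.
Qed.

Lemma periodic_Z (f : R -> R) :
  (forall y (j : nat), f (y + 2 * INR j * PI) = f y) ->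
  forall y (k : Z), f (y + 2 * PI * IZR k) = f y.
Proof.
  intros Hf y k. destruct (Z_le_gt_dec 0 k) as [Hk|Hk].
  - rewrite <- (Z2Nat.id k), <- INR_IZR_INZ by lia.
    rewrite <- (Hf y (Z.to_nat k)). f_equal; ring.
  - rewrite <- (Hf (y + 2 * PI * IZR k) (Z.to_nat (- k))). f_equal.
    rewrite INR_IZR_INZ, Z2Nat.id, opp_IZR by lia. ring.
Qed.

Lemma sin_period_Z y k : sin (y + 2 * PI * IZR k) = sin y.
Proof. revert y k. apply periodic_Z, sin_period. Qed.

Lemma cos_period_Z y k : cos (y + 2 * PI * IZR k) = cos y.
Proof. revert y k. apply periodic_Z, cos_period. Qed.

Lemma telescope_cos x M :
  2 * sin x * sumR (map (fun i => cos (2 * INR i * x)) (seq 1 M)) =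
  sin ((2 * INR M + 1) * x) - sin x.
Proof.
  induction M as [|M IH].
  - simpl. rewrite sumR_nil. replace ((2 * 0 + 1) * x) with x by ring. ring.
  - rewrite seq_S, map_app, sumR_app. cbn [map]. rewrite sumR_cons, sumR_nil.
    rewrite Rmult_plus_distr_l, IH. replace (1 + M)%nat with (S M) by lia. rewrite S_INR.
    replace ((2 * (INR M + 1) + 1) * x) with (2 * (INR M + 1) * x + x) by ring.
    replace ((2 * INR M + 1) * x) with (2 * (INR M + 1) * x - x) by ring.
    rewrite sin_plus, sin_minus. ring.
Qed.

Lemma telescope_sin x M :
  2 * sin x * sumR (map (fun i => sin (2 * INR i * x)) (seq 1 M)) =
  cos x - cos ((2 * INR M + 1) * x).
Proof.
  induction M as [|M IH].
  - simpl. rewrite sumR_nil. replace ((2 * 0 + 1) * x) with x by ring. ring.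
  - rewrite seq_S, map_app, sumR_app. cbn [map]. rewrite sumR_cons, sumR_nil.
    rewrite Rmult_plus_distr_l, IH. replace (1 + M)%nat with (S M) by lia. rewrite S_INR.
    replace ((2 * (INR M + 1) + 1) * x) with (2 * (INR M + 1) * x + x) by ring.
    replace ((2 * INR M + 1) * x) with (2 * (INR M + 1) * x - x) by ring.
    rewrite cos_plus, cos_minus. ring.
Qed.

Definition phase (q c w : Z) : R := 2 * PI * (IZR (c * w) / IZR q).

Lemma phase_sub q c1 c2 w : (q <> 0)%Z -> phase q c1 w - phase q c2 w = phase q (c1 - c2) w.
Proof. intros Hq. unfold phase. rewrite Z.mul_sub_distr_r, minus_IZR. field. now apply not_0_IZR. Qed.

Lemma sin_phase_nonzero (q d : Z) : (1 <= q)%Z -> Z.rem d q <> 0%Z ->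
  sin (PI * IZR d / IZR q) <> 0.
Proof.
  intros Hq Hd H0. apply sin_eq_0_0 in H0 as [j Hj]. apply Hd.
  assert (Hq' : IZR q <> 0) by (apply not_0_IZR; lia).
  assert (E : IZR d = IZR (j * q)).
  { rewrite mult_IZR. apply (Rmult_eq_reg_l PI); [|apply PI_neq0].
    transitivity (PI * IZR d / IZR q * IZR q); [field; auto|]. rewrite Hj. ring. }
  apply eq_IZR in E. subst d. apply Z.rem_mul. lia.
Qed.

Lemma complete_period_sums (q d : Z) (m : nat) : (1 <= q)%Z ->
  sumR (map (fun w => cos (phase q d w)) (rng (m * Z.to_nat q))) =
    (if (Z.rem d q =? 0)%Z then INR (m * Z.to_nat q) else 0) /\
  sumR (map (fun w => sin (phase q d w)) (rng (m * Z.to_nat q))) = 0.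
Proof.
  intros Hq. unfold rng. rewrite !map_map.
  assert (Hq' : IZR q <> 0) by (apply not_0_IZR; lia).
  destruct (Z.eqb_spec (Z.rem d q) 0) as [Hd|Hd].
  - (* every phase is a multiple of 2 pi *)
    apply Z.rem_divide in Hd; [|lia]. destruct Hd as [e ->].
    assert (Hint : forall i : nat,
              phase q (e * q) (Z.of_nat i) = 0 + 2 * PI * IZR (e * Z.of_nat i)).
    { intro i. unfold phase. rewrite !mult_IZR. field. auto. }
    split.
    + rewrite (sumR_ext _ (fun _ => 1)) by (intros i _; rewrite Hint, cos_period_Z; apply cos_0).
      rewrite sumR_const, length_seq. ring.
    + rewrite (sumR_ext _ (fun _ => 0)) by (intros i _; rewrite Hint, sin_period_Z; apply sin_0).
      rewrite sumR_const. ring.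
  - (* a progression of ratio e(d/q) <> 1 over whole periods telescopes to 0 *)
    set (x := PI * IZR d / IZR q).
    assert (Hs : 2 * sin x <> 0) by (pose proof (sin_phase_nonzero q d Hq Hd); fold x in H; lra).
    assert (Hterm : forall i : nat, phase q d (Z.of_nat i) = 2 * INR i * x).
    { intro i. unfold phase, x. rewrite mult_IZR, <- INR_IZR_INZ. field. auto. }
    assert (Hend : (2 * INR (m * Z.to_nat q) + 1) * x = x + 2 * PI * IZR (Z.of_nat m * d)).
    { unfold x. rewrite mult_INR, mult_IZR, <- INR_IZR_INZ, (INR_IZR_INZ (Z.to_nat q)),
        Z2Nat.id by lia. field. auto. }
    split; apply (Rmult_eq_reg_l (2 * sin x)); auto.
    + rewrite (sumR_ext _ (fun i => cos (2 * INR i * x))) by (intros i _; now rewrite Hterm).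
      rewrite telescope_cos, Hend, sin_period_Z. ring.
    + rewrite (sumR_ext _ (fun i => sin (2 * INR i * x))) by (intros i _; now rewrite Hterm).
      rewrite telescope_sin, Hend, cos_period_Z. ring.
Qed.

(* The twisted sum G(w) = Re sum_{(u, v, c) in As} (u - i v) e(c w / q). *)
Definition twisted_sum (q : Z) (As : list (R * R * Z)) (w : Z) : R :=
  sumR (map (fun al => fst (fst al) * cos (phase q (snd al) w)
                     + snd (fst al) * sin (phase q (snd al) w)) As).

Definition collisions (q : Z) (As : list (R * R * Z)) : R :=
  sumR (map (fun a1 => sumR (map (fun a2 => indb (Z.rem (snd a1 - snd a2) q =? 0)%Z) As)) As).

(* Mean square of a twisted sum with coefficients of modulus <= 1 over m complete
   periods: expanding |sum|^2 and using [complete_period_sums], only the pairs of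
   frequencies congruent modulo q survive. *)
Lemma mean_square_complete_periods q As m : (1 <= q)%Z ->
  (forall al, In al As -> fst (fst al) ^ 2 + snd (fst al) ^ 2 <= 1) ->
  sumR (map (fun w => twisted_sum q As w ^ 2) (rng (m * Z.to_nat q))) <=
  INR (m * Z.to_nat q) * collisions q As.
Proof.
  intros Hq HAs.
  (* the imaginary part, which only adds to the mean square *)
  set (K := fun w => sumR (map (fun al => fst (fst al) * sin (phase q (snd al) w)
                                        - snd (fst al) * cos (phase q (snd al) w)) As)).
  set (T := fun (a1 a2 : R * R * Z) (w : Z) =>
     (fst (fst a1) * fst (fst a2) + snd (fst a1) * snd (fst a2)) * cos (phase q (snd a1 - snd a2) w)
     + (snd (fst a1) * fst (fst a2) - fst (fst a1) * snd (fst a2)) * sin (phase q (snd a1 - snd a2) w)).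
  assert (Hexpand : forall w, twisted_sum q As w ^ 2 + K w ^ 2 =
            sumR (map (fun a1 => sumR (map (fun a2 => T a1 a2 w) As)) As)).
  { intro w. unfold twisted_sum, K. rewrite <- !Rsqr_pow2. unfold Rsqr.
    rewrite !sumR_mult, <- sumR_plus. apply sumR_ext. intros a1 _.
    rewrite <- sumR_plus. apply sumR_ext. intros a2 _.
    unfold T. rewrite <- !phase_sub by lia. rewrite cos_minus, sin_minus. ring. }
  apply Rle_trans with (sumR (map (fun w => twisted_sum q As w ^ 2 + K w ^ 2) (rng (m * Z.to_nat q)))).
  { apply sumR_le. intros w _. pose proof (pow2_ge_0 (K w)). lra. }
  rewrite (sumR_ext _ _ _ (fun w _ => Hexpand w)).
  unfold collisions. rewrite sumR_swap, <- sumR_scal. apply sumR_le. intros a1 Ha1.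
  rewrite sumR_swap, <- sumR_scal. apply sumR_le. intros a2 Ha2.
  unfold T. rewrite sumR_plus, !sumR_scal.
  destruct (complete_period_sums q (snd a1 - snd a2) m Hq) as [-> ->].
  destruct (Z.rem (snd a1 - snd a2) q =? 0)%Z; simpl; [|lra].
  pose proof (HAs a1 Ha1). pose proof (HAs a2 Ha2). pose proof (pos_INR (m * Z.to_nat q)).
  pose proof (pow2_ge_0 (fst (fst a1) - fst (fst a2))).
  pose proof (pow2_ge_0 (snd (fst a1) - snd (fst a2))).
  assert (fst (fst a1) * fst (fst a2) + snd (fst a1) * snd (fst a2) <= 1) by nra.
  nra.
Qed.

Lemma tuples_in (P : list Z) j t :
  In t (tuples P j) -> length t = j /\ forall p, In p t -> In p P.
Proof.
  revert t; induction j as [|j IH]; intros t Ht; simpl in Ht.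
  - destruct Ht as [<-|[]]. split; [reflexivity|]. intros p [].
  - apply in_flat_map in Ht as [x [Hx Ht]]. apply in_map_iff in Ht as [t' [<- Ht']].
    apply IH in Ht' as [Hl Hin]. simpl; split; [lia|]. intros p [<-|Hp]; auto.
Qed.

Lemma tuples_length (P : list Z) j : length (tuples P j) = (length P ^ j)%nat.
Proof.
  induction j as [|j IH]; [reflexivity|]. cbn [tuples].
  assert (Hfm : forall l : list Z,
            length (flat_map (fun x => map (cons x) (tuples P j)) l) = (length l * length (tuples P j))%nat).
  { induction l as [|x l IHl]; [reflexivity|]. simpl. rewrite length_app, length_map, IHl. lia. }
  rewrite Hfm, IH. simpl. lia.
Qed.

Lemma tuples_split (P : list Z) (F : list Z -> R) j s :
  sumR (map F (tuples P (j + s))) =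
  sumR (map (fun x => sumR (map (fun y => F (x ++ y)) (tuples P s))) (tuples P j)).
Proof.
  revert F. induction j as [|j IH]; intros F.
  - simpl. now rewrite sumR_cons, sumR_nil, Rplus_0_r.
  - cbn [Nat.add tuples]. rewrite !sumR_flat_map. apply sumR_ext. intros p _.
    rewrite !map_map. apply (IH (fun t => F (p :: t))).
Qed.

Lemma prodZ_app x y : prodZ (x ++ y) = (prodZ x * prodZ y)%Z.
Proof.
  induction x as [|p x IH]; [symmetry; apply Z.mul_1_l|].
  change (p * prodZ (x ++ y) = p * prodZ x * prodZ y)%Z. rewrite IH. ring.
Qed.

Lemma prodZ_pos t : (forall p, In p t -> 1 <= p)%Z -> (1 <= prodZ t)%Z.
Proof.
  induction t as [|p t IH]; intros H; cbn [prodZ fold_right] in *; [lia|].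
  assert (1 <= p)%Z by (apply H; left; auto).
  assert (1 <= fold_right Z.mul 1 t)%Z by (apply IH; intros; apply H; right; auto). nia.
Qed.

Lemma prodZ_le t B : (forall p, In p t -> 1 <= p <= B)%Z -> (prodZ t <= B ^ Z.of_nat (length t))%Z.
Proof.
  induction t as [|p t IH]; intros H; [simpl; lia|].
  change (prodZ (p :: t)) with (p * prodZ t)%Z. cbn [length].
  rewrite Nat2Z.inj_succ, Z.pow_succ_r by lia.
  assert (1 <= p <= B)%Z by (apply H; left; auto).
  assert (prodZ t <= B ^ Z.of_nat (length t))%Z by (apply IH; intros; apply H; right; auto).
  assert (1 <= prodZ t)%Z by (apply prodZ_pos; intros; apply H; right; auto). nia.
Qed.

Lemma prodZ_tuple_bounds (P : list Z) (B : Z) j x :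
  (forall p, In p P -> 1 <= p <= B)%Z -> In x (tuples P j) ->
  (1 <= prodZ x <= B ^ Z.of_nat j)%Z.
Proof.
  intros HP Hx. destruct (tuples_in _ _ _ Hx) as [Hl Hin]. split.
  - apply prodZ_pos. intros p Hp. now apply HP, Hin.
  - rewrite <- Hl. apply prodZ_le. intros p Hp. now apply HP, Hin.
Qed.

Lemma prod_lower_bound (N : R) F : 0 <= N / 2 -> (forall p, In p F -> N / 2 <= IZR p) ->
  (N / 2) ^ length F <= IZR (prodZ F).
Proof.
  induction F as [|p F IH]; intros H0 H; [simpl; lra|].
  change (prodZ (p :: F)) with (p * prodZ F)%Z. cbn [length pow]. rewrite mult_IZR.
  apply Rmult_le_compat; auto.
  - apply pow_le; auto.
  - apply H; left; auto.
  - apply IH; auto. intros; apply H; right; auto.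
Qed.

Definition dvdb (d z : Z) : bool := Z.eqb (Z.rem z d) 0.

Lemma dvdb_spec d z : (d <> 0)%Z -> (dvdb d z = true <-> (d | z)%Z).
Proof. intros H. unfold dvdb. rewrite Z.eqb_eq. now apply Z.rem_divide. Qed.

Lemma prime_rel_prime_prod a F : prime a -> (forall p, In p F -> prime p) -> ~ In a F ->
  rel_prime a (prodZ F).
Proof.
  intros Ha. induction F as [|b F IH]; intros HF Hn.
  - apply rel_prime_sym, rel_prime_1.
  - change (prodZ (b :: F)) with (b * prodZ F)%Z. apply rel_prime_mult.
    + apply prime_rel_prime; auto. intro Hd. apply Hn. left.
      symmetry. apply prime_div_prime; auto. apply HF; left; auto.
    + apply IH; [intros; apply HF; right; auto | intro; apply Hn; right; auto].
Qed.

Lemma prod_distinct_primes_divides z F : NoDup F ->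
  (forall p, In p F -> prime p /\ (p | z)%Z) -> (prodZ F | z)%Z.
Proof.
  induction 1 as [|a F Ha HF IH]; intros H.
  - apply Z.divide_1_l.
  - change (prodZ (a :: F)) with (a * prodZ F)%Z.
    destruct (H a (or_introl eq_refl)) as [Hpa Hda].
    destruct IH as [w Hw]; [intros; apply H; right; auto|].
    assert (Hrel : rel_prime a (prodZ F))
      by (apply prime_rel_prime_prod; auto; intros; apply H; right; auto).
    assert (Hw' : (a | prodZ F * w)%Z) by (rewrite Z.mul_comm, <- Hw; auto).
    apply Gauss in Hw' as [v Hv]; auto. exists v. rewrite Hw, Hv. ring.
Qed.

Lemma pow_half_gt (N : R) (D : nat) : 2 ^ S D < N -> N ^ D < (N / 2) ^ S D.
Proof.
  intros H. assert (H2 : 0 < 2 ^ S D) by (apply pow_lt; lra).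
  assert (HND : 0 < N ^ D) by (apply pow_lt; lra).
  assert (E : (N / 2) ^ S D * 2 ^ S D = N * N ^ D).
  { rewrite <- Rpow_mult_distr. replace (N / 2 * 2) with N by field. reflexivity. }
  apply (Rmult_lt_reg_r (2 ^ S D)); [lra|]. rewrite E. nra.
Qed.

(* An integer 1 <= z <= N^D has at most D distinct prime divisors >= N/2, provided
   2^(D+1) < N: otherwise the product of D + 1 of them would exceed N^D. *)
Lemma few_large_prime_divisors (P : list Z) (N : R) (D : nat) z :
  NoDup P -> (forall p, In p P -> prime p /\ N / 2 <= IZR p) ->
  (1 <= z)%Z -> IZR z <= N ^ D -> 2 ^ (D + 1) < N ->
  (length (filter (fun p => dvdb p z) P) <= D)%nat.
Proof.
  intros HPnd HP Hz HzN H2. rewrite Nat.add_1_r in H2.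
  set (F := filter (fun p => dvdb p z) P).
  assert (HF : forall p, In p F -> prime p /\ N / 2 <= IZR p /\ (p | z)%Z).
  { intros p Hp. apply filter_In in Hp as [Hp E]. destruct (HP p Hp) as [Hpr Hle].
    pose proof (prime_ge_2 p Hpr). split; [|split]; auto. apply dvdb_spec in E; auto; lia. }
  assert (Hd : (prodZ F | z)%Z).
  { apply prod_distinct_primes_divides; [now apply NoDup_filter|].
    intros p Hp; destruct (HF p Hp) as [? [? ?]]; auto. }
  assert (HN2 : 1 <= N / 2).
  { assert (2 <= 2 ^ S D) by (simpl; pose proof (pow_R1_Rle 2 D ltac:(lra)); lra). lra. }
  assert (Hlow : (N / 2) ^ length F <= IZR z).
  { apply Rle_trans with (IZR (prodZ F)).
    - apply prod_lower_bound; [lra|]. intros p Hp; apply HF; auto.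
    - apply IZR_le, Z.divide_pos_le; auto; lia. }
  destruct (Nat.le_gt_cases (length F) D) as [|Hgt]; auto. exfalso.
  assert ((N / 2) ^ S D <= (N / 2) ^ length F) by (apply Rle_pow; [exact HN2| lia]).
  pose proof (pow_half_gt N D H2). lra.
Qed.

Section DivisorCount.
Variable P : list Z.
Hypothesis HP2 : forall p, In p P -> (2 <= p)%Z.
Variables (Nmax : R) (D : nat).
Hypothesis Hfew : forall z, (1 <= z)%Z -> IZR z <= Nmax ->
  (length (filter (fun p => dvdb p z) P) <= D)%nat.

Lemma tuples_dividing_count j : forall z, (1 <= z)%Z -> IZR z <= Nmax ->
  sumR (map (fun x => indb (dvdb (prodZ x) z)) (tuples P j)) <= INR D ^ j.
Proof.
  induction j as [|j IH]; intros z Hz HzN.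
  - simpl. rewrite sumR_cons, sumR_nil. pose proof (indb_le1 (dvdb 1 z)). lra.
  - cbn [tuples]. rewrite sumR_flat_map.
    apply Rle_trans with (sumR (map (fun p => INR D ^ j * indb (dvdb p z)) P)).
    + apply sumR_le. intros p Hp. rewrite map_map. cbn [prodZ fold_right].
      assert (Hp2 := HP2 p Hp).
      assert (Htup : forall t, In t (tuples P j) -> (1 <= prodZ t)%Z).
      { intros t Ht. apply prodZ_pos. intros p' Hp'.
        apply (proj2 (tuples_in _ _ _ Ht)), HP2 in Hp'. lia. }
      destruct (dvdb p z) eqn:E.
      * (* p t | z  iff  t | z / p *)
        apply dvdb_spec in E as [w Hw]; [|lia].
        apply Rle_trans with (sumR (map (fun x => indb (dvdb (prodZ x) w)) (tuples P j))).
        -- apply sumR_le. intros t Ht. fold (prodZ t). specialize (Htup t Ht).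
           destruct (dvdb (p * prodZ t) z) eqn:E2; [|apply indb_nonneg].
           apply dvdb_spec in E2; [|nia]. replace (dvdb (prodZ t) w) with true; [lra|].
           symmetry. apply dvdb_spec; [lia|]. subst z.
           rewrite (Z.mul_comm w p) in E2. apply Z.mul_divide_cancel_l in E2; auto. lia.
        -- simpl indb. rewrite Rmult_1_r. apply IH; [nia|].
           apply Rle_trans with (IZR z); auto. apply IZR_le. nia.
      *
        simpl indb. rewrite Rmult_0_r, (sumR_ext _ (fun _ => 0)), sumR_const; [lra|].
        intros t Ht. fold (prodZ t). specialize (Htup t Ht).
        destruct (dvdb (p * prodZ t) z) eqn:E2; [|reflexivity].
        apply dvdb_spec in E2; [|nia]. exfalso.
        assert (dvdb p z = true)
          by (apply dvdb_spec; [lia|]; apply Z.divide_trans with (p * prodZ t)%Z; auto;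
              exists (prodZ t); ring).
        congruence.
    + rewrite sumR_scal, sum_indb_length. simpl pow. rewrite Rmult_comm.
      apply Rmult_le_compat_r; [apply pow_le, pos_INR|]. apply le_INR, Hfew; auto.
Qed.

(* Change of variables z = l * prod(x) for l <= L and x a j-tuple of P with entries
   <= B: each z <= M is hit at most D^j times, since prod(x) must divide z. *)
Lemma sum_over_multiples_of_products (B M : Z) (L j : nat) (g : Z -> R) :
  (forall p, In p P -> p <= B)%Z -> (Z.of_nat L * B ^ Z.of_nat j <= M)%Z -> IZR M <= Nmax ->
  (forall z, 0 <= g z) ->
  sumR (map (fun l => sumR (map (fun x => g (Z.of_nat l * prodZ x)%Z) (tuples P j))) (seq 1 L))
  <= INR D ^ j * sumR (map g (rng (Z.to_nat M))).
Proof.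
  intros HPB HM HMN Hg.
  assert (HP1B : forall p, In p P -> (1 <= p <= B)%Z)
    by (intros p Hp; specialize (HP2 p Hp); specialize (HPB p Hp); lia).
  set (LX := flat_map (fun l => map (pair l) (tuples P j)) (seq 1 L)).
  set (phi := fun lx : nat * list Z => (Z.of_nat (fst lx) * prodZ (snd lx))%Z).
  assert (E : sumR (map (fun l => sumR (map (fun x => g (Z.of_nat l * prodZ x)%Z) (tuples P j))) (seq 1 L))
              = sumR (map (fun lx => g (phi lx)) LX)).
  { unfold LX. rewrite sumR_flat_map. apply sumR_ext. intros l _. now rewrite map_map. }
  rewrite E. apply sum_reindex_le; auto using rng_NoDup.
  - intros lx Hlx. unfold LX in Hlx. apply in_flat_map in Hlx as [l [Hl Hlx]].
    apply in_map_iff in Hlx as [x [<- Hx]]. apply in_seq in Hl.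
    pose proof (prodZ_tuple_bounds P B j x HP1B Hx). apply in_rng. unfold phi; simpl. nia.
  - intros z Hz. apply in_rng in Hz.
    unfold LX. rewrite sumR_flat_map.
    rewrite (sumR_ext _ (fun l => sumR (map (fun x => indb (Z.of_nat l * prodZ x =? z)%Z) (tuples P j))))
      by (intros l _; now rewrite map_map).
    rewrite sumR_swap.
    apply Rle_trans with (sumR (map (fun x => indb (dvdb (prodZ x) z)) (tuples P j))).
    + apply sumR_le. intros x Hx. pose proof (prodZ_tuple_bounds P B j x HP1B Hx).
      destruct (dvdb (prodZ x) z) eqn:Ed.
      * (* l is determined by z = l * prod(x) *)
        apply sum_indb_atmost1; [apply seq_NoDup|]. intros l1 l2 _ _ E1 E2.
        apply Z.eqb_eq in E1. apply Z.eqb_eq in E2. nia.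
      * simpl indb. rewrite (sumR_ext _ (fun _ => 0)), sumR_const; [lra|].
        intros l _. destruct (Z.eqb_spec (Z.of_nat l * prodZ x) z); [|reflexivity].
        exfalso. assert (dvdb (prodZ x) z = true)
          by (apply dvdb_spec; [lia|]; exists (Z.of_nat l); lia).
        congruence.
    + apply tuples_dividing_count; [lia|].
      apply Rle_trans with (IZR M); auto. apply IZR_le. lia.
Qed.

Lemma sum_over_products (B M : Z) (j : nat) (g : Z -> R) :
  (forall p, In p P -> p <= B)%Z -> (B ^ Z.of_nat j <= M)%Z -> IZR M <= Nmax ->
  (forall z, 0 <= g z) ->
  sumR (map (fun x => g (prodZ x)) (tuples P j)) <= INR D ^ j * sumR (map g (rng (Z.to_nat M))).
Proof.
  intros HPB HM HMN Hg.
  pose proof (sum_over_multiples_of_products B M 1 j g HPB ltac:(lia) HMN Hg) as H.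
  cbn [seq map] in H. rewrite sumR_cons, sumR_nil, Rplus_0_r in H.
  rewrite (sumR_ext _ (fun x => g (1 * prodZ x)%Z)); auto.
  intros x _. now rewrite Z.mul_1_l.
Qed.
End DivisorCount.

(* For gcd(a, q) = 1, at most M/q + 1 integers 1 <= z <= M satisfy z a = c0 mod q:
   two solutions differ by a multiple of q, so they have distinct quotients by q. *)
Lemma congruence_count (a q c0 M : Z) : (1 <= q)%Z -> (0 <= M)%Z -> Z.gcd a q = 1%Z ->
  sumR (map (fun z => indb (Z.rem (c0 - z * a) q =? 0)%Z) (rng (Z.to_nat M))) <= IZR M / IZR q + 1.
Proof.
  intros Hq HM Hg. rewrite sum_indb_length.
  set (F := filter (fun z => Z.rem (c0 - z * a) q =? 0)%Z (rng (Z.to_nat M))).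
  assert (Hrel : rel_prime q a) by (apply rel_prime_sym, Zgcd_1_rel_prime; auto).
  assert (HF : forall z, In z F -> (1 <= z <= M)%Z /\ (q | c0 - z * a)%Z).
  { intros z Hz. apply filter_In in Hz as [Hz E]. apply in_rng in Hz. split; [lia|].
    apply Z.eqb_eq in E. apply Z.rem_divide; auto. lia. }
  assert (Hnd : NoDup (map (fun z => z / q)%Z F)).
  { apply NoDup_map_NoDup_ForallPairs; [|apply NoDup_filter, rng_NoDup].
    intros z1 z2 H1 H2 E. destruct (HF z1 H1) as [_ D1]. destruct (HF z2 H2) as [_ D2].
    assert (Hd : (q | a * (z2 - z1))%Z).
    { replace (a * (z2 - z1))%Z with ((c0 - z1 * a) - (c0 - z2 * a))%Z by ring.
      now apply Z.divide_sub_r. }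
    apply Gauss in Hd as [k Hk]; auto.
    pose proof (Z.div_mod z1 q ltac:(lia)). pose proof (Z.div_mod z2 q ltac:(lia)).
    pose proof (Z.mod_pos_bound z1 q ltac:(lia)). pose proof (Z.mod_pos_bound z2 q ltac:(lia)).
    rewrite E in *. assert (k = 0)%Z by nia. subst k. lia. }
  assert (Hincl : incl (map (fun z => z / q)%Z F) (map Z.of_nat (seq 0 (S (Z.to_nat (M / q)))))).
  { intros y Hy. apply in_map_iff in Hy as [z [<- Hz]]. destruct (HF z Hz) as [Hr _].
    apply in_map_iff. exists (Z.to_nat (z / q)). split.
    - apply Z2Nat.id, Z.div_pos; lia.
    - apply in_seq.
      assert (0 <= z / q <= M / q)%Z by (split; [apply Z.div_pos| apply Z.div_le_mono]; lia). lia. }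
  pose proof (NoDup_incl_length Hnd Hincl) as Hl. rewrite !length_map, length_seq in Hl.
  apply le_INR in Hl. rewrite S_INR, (INR_IZR_INZ (Z.to_nat (M / q))), Z2Nat.id in Hl by (apply Z.div_pos; lia).
  assert (IZR (M / q) <= IZR M / IZR q).
  { assert (Hqd : (q * (M / q) <= M)%Z) by (apply Z.mul_div_le; lia).
    apply IZR_le in Hqd. rewrite mult_IZR in Hqd. assert (0 < IZR q) by (apply IZR_lt; lia).
    apply Rmult_le_reg_l with (IZR q); auto. unfold Rdiv. rewrite <- Rmult_assoc, Rinv_r_simpl_m; lra. }
  lra.
Qed.

(* The unit vector (u, v) = (sum cos, sum sin) / |sum e(x)| realising |sum e(x)|
   as the real part u sum cos + v sum sin (both 0 when the sum vanishes). *)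
Definition dual_re (xs : list R) : R :=
  if Rlt_dec 0 (abs_sum_e xs) then sumR (map e_re xs) / abs_sum_e xs else 0.
Definition dual_im (xs : list R) : R :=
  if Rlt_dec 0 (abs_sum_e xs) then sumR (map e_im xs) / abs_sum_e xs else 0.

Lemma abs_sum_e_dual xs :
  abs_sum_e xs = sumR (map (fun x => dual_re xs * e_re x + dual_im xs * e_im x) xs) /\
  dual_re xs ^ 2 + dual_im xs ^ 2 <= 1.
Proof.
  rewrite sumR_plus, !sumR_scal. unfold dual_re, dual_im.
  set (re := sumR (map e_re xs)). set (im := sumR (map e_im xs)).
  assert (Habs : abs_sum_e xs = sqrt (re * re + im * im)) by reflexivity.
  assert (Hsq : 0 <= re * re + im * im) by nra.
  destruct (Rlt_dec 0 (abs_sum_e xs)) as [Hp|Hp].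
  - pose proof (sqrt_sqrt _ Hsq) as Hs. rewrite <- Habs in Hs. split.
    + replace (re / abs_sum_e xs * re + im / abs_sum_e xs * im)
        with ((re * re + im * im) / abs_sum_e xs) by (field; lra).
      rewrite <- Hs. field. lra.
    + apply Req_le. replace ((re / abs_sum_e xs) ^ 2 + (im / abs_sum_e xs) ^ 2)
        with ((re * re + im * im) / (abs_sum_e xs * abs_sum_e xs)) by (field; lra).
      rewrite <- Hs. field. lra.
  - assert (abs_sum_e xs = 0) by (pose proof (sqrt_pos (re * re + im * im)); lra).
    split; [rewrite H; ring | lra].
Qed.

Lemma unit_bound u v x : u ^ 2 + v ^ 2 <= 1 -> u * cos x + v * sin x <= 1.
Proof.
  intros H. pose proof (sin2_cos2 x) as Hsc. unfold Rsqr in Hsc.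
  assert (E : (u * cos x + v * sin x) ^ 2 + (u * sin x - v * cos x) ^ 2
              = (u ^ 2 + v ^ 2) * (sin x * sin x + cos x * cos x)) by ring.
  pose proof (pow2_ge_0 (u * sin x - v * cos x)). nra.
Qed.

Lemma abs_sum_e_le_length xs : abs_sum_e xs <= INR (length xs).
Proof.
  destruct (abs_sum_e_dual xs) as [-> Hunit].
  rewrite <- (Rmult_1_r (INR (length xs))), <- sumR_const.
  apply sumR_le. intros x _. now apply unit_bound.
Qed.

Lemma length_le_of_bounded (P : list Z) (B : Z) : NoDup P ->
  (forall p, In p P -> 1 <= p <= B)%Z -> (length P <= Z.to_nat B)%nat.
Proof.
  intros Hnd HP. rewrite <- (rng_length (Z.to_nat B)). apply NoDup_incl_length; auto.
  intros p Hp. apply in_rng. specialize (HP p Hp). lia.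
Qed.

Lemma primesP_spec N q : 1 <= N ->
  NoDup (primesP N q) /\ 1 <= IZR (up N - 1) <= N /\
  (forall p, In p (primesP N q) -> prime p /\ N / 2 <= IZR p /\ (p <= up N - 1)%Z).
Proof.
  intros HN. destruct (archimed N) as [Hup1 Hup2]. rewrite minus_IZR.
  assert (H1 : (1 < up N)%Z) by (apply lt_IZR; lra).
  assert (H2 : 2 <= IZR (up N)) by (apply IZR_le; lia). split; [|split; [lra|]].
  - apply NoDup_filter, Injective_map_NoDup; [intros x y; lia | apply seq_NoDup].
  - intros p Hp. apply filter_In in Hp as [_ E].
    destruct (prime_dec p); [|discriminate]. destruct (Rle_dec (N / 2) (IZR p)); [|discriminate].
    destruct (Rle_dec (IZR p) N); [|discriminate]. split; [auto|split; [auto|]].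
    assert (IZR p < IZR (up N)) by lra. apply lt_IZR in H. lia.
Qed.

Lemma sqrt_of_square_bound (X c A B : R) : 1 <= c -> 0 <= A -> 0 <= B ->
  X ^ 2 <= 2 * c * (A ^ 2 + B ^ 2) -> X <= 2 * c * Rmax A B.
Proof.
  intros Hc HA HB HX. pose proof (Rmax_l A B). pose proof (Rmax_r A B).
  set (M := Rmax A B) in *.
  assert (HM2 : A ^ 2 + B ^ 2 <= 2 * M ^ 2) by nra.
  assert (HX2 : X ^ 2 <= (2 * c * M) ^ 2) by nra.
  assert (HcM : 0 <= 2 * c * M) by nra.
  destruct (Rle_dec X (2 * c * M)) as [|Hgt]; [assumption|]. nra.
Qed.

Lemma dim_power_bound (n k : nat) : (k <= n)%nat -> INR (n + k) ^ n <= 2 ^ (n + k) * INR n ^ n.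
Proof.
  intros Hkn. apply Rle_trans with ((2 * INR n) ^ n).
  - apply pow_incr. split; [apply pos_INR|]. rewrite plus_INR.
    assert (INR k <= INR n) by (apply le_INR; auto). lra.
  - rewrite Rpow_mult_distr. apply Rmult_le_compat_r; [apply pow_le, pos_INR|].
    apply Rle_pow; [lra|lia].
Qed.

(* The real arithmetic of the type II bound (n = k + s): with |Y| <= N^s,
   m q <= N^s + q, #coefficients <= L N^k and #frequencies <= L N^k,
   the product of the counts is at most 2 D^n (A^2 + B^2), where
   A = L N^((n+k)/2) and B = L N^n / sqrt q. *)
Lemma typeII_arith (Ly Dr Mq LAs Zn q L N : R) (k s : nat) :
  0 <= Ly <= N ^ s -> 0 <= Mq <= N ^ s + q -> 0 <= LAs <= L * N ^ k ->
  0 <= Zn <= L * N ^ k -> 1 <= q <= L * N ^ k -> 1 <= N -> 1 <= Dr -> 0 <= L ->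
  Ly * (Dr ^ s * (Mq * (LAs * (Dr ^ k * (Zn / q + 1))))) <=
  2 * Dr ^ (k + s) * ((L * Rpower N (INR (k + s) / 2 + INR k / 2)) ^ 2
                      + (L * N ^ (k + s) / sqrt q) ^ 2).
Proof.
  intros HLy HMq HLAs HZn Hq HN HDr HL.
  assert (HNp : forall j, 0 < N ^ j) by (intro; apply pow_lt; lra).
  assert (HDp : forall j, 0 < Dr ^ j) by (intro; apply pow_lt; lra).
  assert (Hsq : sqrt q * sqrt q = q) by (apply sqrt_sqrt; lra).
  assert (Hsqp : 0 < sqrt q) by (apply sqrt_lt_R0; lra).
  set (x := INR (k + s) / 2 + INR k / 2).
  assert (HA2 : (L * Rpower N x) ^ 2 = L * L * N ^ (k + s + k)).
  { replace ((L * Rpower N x) ^ 2) with (L * L * (Rpower N x * Rpower N x)) by ring.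
    rewrite <- Rpower_plus, <- Rpower_pow by lra.
    replace (x + x) with (INR (k + s + k)) by (unfold x; rewrite !plus_INR; lra).
    reflexivity. }
  assert (HB2 : (L * N ^ (k + s) / sqrt q) ^ 2 = L * L * N ^ (k + s + (k + s)) / q).
  { replace (L * L * N ^ (k + s + (k + s)) / q)
      with (L * L * N ^ (k + s + (k + s)) / (sqrt q * sqrt q)) by now rewrite Hsq.
    rewrite !pow_add. field. lra. }
  (* the number of frequencies in a class mod q is at most Zn/q + 1 <= 2 L N^k / q *)
  assert (Hfreq : Zn / q + 1 <= 2 * (L * N ^ k) / q).
  { replace (Zn / q + 1) with ((Zn + q) / q) by (field; lra). unfold Rdiv.
    apply Rmult_le_compat_r; [left; apply Rinv_0_lt_compat|]; lra. }
  assert (Hfreq0 : 0 <= Zn / q + 1).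
  { assert (0 <= Zn / q) by (unfold Rdiv; apply Rmult_le_pos; [lra|left; apply Rinv_0_lt_compat; lra]).
    lra. }
  apply Rle_trans with (N ^ s * (Dr ^ s * ((N ^ s + q) * (L * N ^ k * (Dr ^ k * (2 * (L * N ^ k) / q)))))).
  - apply Rmult_le_compat; try lra.
    + repeat apply Rmult_le_pos; try lra; left; auto.
    + apply Rmult_le_compat_l; [left; auto|].
      apply Rmult_le_compat; try lra.
      * repeat apply Rmult_le_pos; try lra; left; auto.
      * apply Rmult_le_compat; try lra.
        -- apply Rmult_le_pos; [left; auto| lra].
        -- apply Rmult_le_compat_l; [left; auto| lra].
  - apply Req_le. rewrite HA2, HB2, !pow_add. field. lra.
Qed.

Lemma trivial_estimate (P : list Z) (theta : nat -> list Z -> R) (n k L : nat) (N q : R) :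
  INR (length P) <= N -> 1 <= N -> (1 <= n)%nat -> (n <= k)%nat ->
  sumR (map (fun l => abs_sum_e (map (theta l) (tuples P n))) (seq 1 L))
  <= 2 * 2 ^ (n + k) * INR n ^ n *
     Rmax (INR L * Rpower N (INR n / 2 + INR k / 2)) (INR L * N ^ n / sqrt q).
Proof.
  intros HP HN Hn Hnk.
  set (A := INR L * Rpower N (INR n / 2 + INR k / 2)).
  assert (Hsum : sumR (map (fun l => abs_sum_e (map (theta l) (tuples P n))) (seq 1 L)) <= A).
  { apply Rle_trans with (sumR (map (fun _ => N ^ n) (seq 1 L))).
    - apply sumR_le. intros l _. eapply Rle_trans; [apply abs_sum_e_le_length|].
      rewrite length_map, tuples_length, pow_INR. apply pow_incr. split; [apply pos_INR|auto].
    - rewrite sumR_const, length_seq. apply Rmult_le_compat_l; [apply pos_INR|].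
      rewrite <- Rpower_pow by lra. apply Rle_Rpower; auto.
      assert (INR n <= INR k) by (apply le_INR; auto). lra. }
  assert (HA : 0 <= A) by (apply Rmult_le_pos; [apply pos_INR|unfold Rpower; left; apply exp_pos]).
  assert (Hconst : 1 <= 2 ^ (n + k) * INR n ^ n).
  { rewrite <- (Rmult_1_l 1). apply Rmult_le_compat; try lra; apply pow_R1_Rle; [lra|].
    apply (le_INR 1); auto. }
  pose proof (Rmax_l A (INR L * N ^ n / sqrt q)).
  apply Rle_trans with (1 * Rmax A (INR L * N ^ n / sqrt q)); [lra|].
  apply Rmult_le_compat_r; lra.
Qed.

Definition coeffs (u v : nat -> R) (a : Z) (L : nat) (X : list (list Z)) : list (R * R * Z) :=
  flat_map (fun l => map (fun x => (u l, v l, (Z.of_nat l * prodZ x * a)%Z)) X) (seq 1 L).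

Lemma sum_coeffs u v a L X (F : R * R * Z -> R) :
  sumR (map F (coeffs u v a L X)) =
  sumR (map (fun l => sumR (map (fun x => F (u l, v l, (Z.of_nat l * prodZ x * a)%Z)) X)) (seq 1 L)).
Proof. unfold coeffs. rewrite sumR_flat_map. apply sumR_ext. intros; now rewrite map_map. Qed.

Lemma coeffs_length u v a L X : length (coeffs u v a L X) = (L * length X)%nat.
Proof.
  unfold coeffs. rewrite <- (length_seq L 1) at 2.
  induction (seq 1 L) as [|l ls IH]; [reflexivity|].
  simpl. rewrite length_app, length_map, IH. lia.
Qed.

Definition typeII_term (u v : nat -> R) (a q : Z) (l : nat) (t : list Z) : R :=
  u l * e_re (IZR (Z.of_nat l * prodZ t * a) / IZR q)
  + v l * e_im (IZR (Z.of_nat l * prodZ t * a) / IZR q).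

Section TypeII.
Variables (a q B : Z) (N : R) (P : list Z) (L k s : nat) (u v : nat -> R).
Hypothesis Hq : (1 <= q)%Z.
Hypothesis Hgcd : Z.gcd a q = 1%Z.
Hypothesis HPnd : NoDup P.
Hypothesis HP : forall p, In p P -> prime p /\ N / 2 <= IZR p /\ (p <= B)%Z.
Hypothesis HB : 1 <= IZR B <= N.
Hypothesis HN : 2 ^ (k + s + k + 1) < N.
Hypothesis HLN : INR L <= N ^ (k + s).
Hypothesis HqL : IZR q <= INR L * N ^ k.
Hypothesis Hk : (1 <= k)%nat.
Hypothesis Huv : forall l, u l ^ 2 + v l ^ 2 <= 1.

Let D := (k + s + k)%nat.
Let As := coeffs u v a L (tuples P k).
Let m := Z.to_nat (B ^ Z.of_nat s / q + 1).

Lemma P_ge2 : forall p, In p P -> (2 <= p)%Z.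
Proof. intros p Hp. apply prime_ge_2, (HP p Hp). Qed.

Lemma P_le_B : forall p, In p P -> (p <= B)%Z.
Proof. intros p Hp. apply (HP p Hp). Qed.

Lemma P_length : INR (length P) <= N.
Proof.
  apply Rle_trans with (IZR B); [|apply HB].
  rewrite INR_IZR_INZ. apply IZR_le.
  assert (H1B : (1 <= B)%Z) by (apply le_IZR; apply HB).
  enough (length P <= Z.to_nat B)%nat by lia.
  apply length_le_of_bounded; auto. intros p Hp. pose proof (P_ge2 p Hp). pose proof (P_le_B p Hp). lia.
Qed.

Lemma pow_B_bounds j : (1 <= B ^ Z.of_nat j)%Z /\ IZR (B ^ Z.of_nat j) <= N ^ j.
Proof.
  assert (H1B : (1 <= B)%Z) by (apply le_IZR; apply HB). split.
  - pose proof (Z.pow_pos_nonneg B (Z.of_nat j) ltac:(lia) ltac:(lia)). lia.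
  - rewrite <- pow_IZR. apply pow_incr. lra.
Qed.

Lemma P_few_divisors z : (1 <= z)%Z -> IZR z <= N ^ D ->
  (length (filter (fun p => dvdb p z) P) <= D)%nat.
Proof.
  intros Hz HzN. apply few_large_prime_divisors with N; auto.
  intros p Hp. destruct (HP p Hp) as [? [? _]]; auto.
Qed.

Lemma As_unit : forall al, In al As -> fst (fst al) ^ 2 + snd (fst al) ^ 2 <= 1.
Proof.
  intros al Hal. unfold As, coeffs in Hal.
  apply in_flat_map in Hal as [l [_ Hl]]. apply in_map_iff in Hl as [x [<- _]]. apply Huv.
Qed.

(* Splitting n-tuples as x ++ y turns the sum into sum_y G(prod y) for the twisted
   sum G with coefficients As. *)
Lemma typeII_identity :
  sumR (map (fun l => sumR (map (typeII_term u v a q l) (tuples P (k + s)))) (seq 1 L))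
  = sumR (map (fun y => twisted_sum q As (prodZ y)) (tuples P s)).
Proof.
  transitivity (sumR (map (fun y => sumR (map (fun l => sumR (map (fun x =>
                  typeII_term u v a q l (x ++ y)) (tuples P k))) (seq 1 L))) (tuples P s))).
  - symmetry. rewrite sumR_swap. apply sumR_ext. intros l _.
    rewrite tuples_split, sumR_swap. reflexivity.
  - apply sumR_ext. intros y _. unfold twisted_sum, As. rewrite sum_coeffs.
    apply sumR_ext. intros l _. apply sumR_ext. intros x _.
    unfold typeII_term, e_re, e_im, phase. cbn [fst snd]. rewrite prodZ_app.
    replace (Z.of_nat l * (prodZ x * prodZ y) * a)%Z
      with (Z.of_nat l * prodZ x * a * prodZ y)%Z by ring.
    reflexivity.
Qed.

(* For fixed (u, v, c1) in As, the frequencies l prod(x) a congruent to c1 mod q come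
   from at most D^k (L B^k / q + 1) pairs (l, x). *)
Lemma collisions_bound :
  collisions q As <=
  INR (length As) * (INR D ^ k * (IZR (Z.of_nat L * B ^ Z.of_nat k) / IZR q + 1)).
Proof.
  destruct (pow_B_bounds k) as [HBk HBkN].
  assert (HZn : IZR (Z.of_nat L * B ^ Z.of_nat k) <= N ^ D).
  { rewrite mult_IZR, <- INR_IZR_INZ. unfold D. rewrite pow_add.
    apply Rmult_le_compat; auto using pos_INR. apply IZR_le. lia. }
  unfold collisions. rewrite <- sumR_const. apply sumR_le. intros a1 _.
  unfold As at 1. rewrite sum_coeffs.
  set (g := fun z => indb (Z.rem (snd a1 - z * a) q =? 0)%Z).
  apply Rle_trans with (INR D ^ k * sumR (map g (rng (Z.to_nat (Z.of_nat L * B ^ Z.of_nat k))))).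
  - apply (sum_over_multiples_of_products P P_ge2 (N ^ D) D P_few_divisors B
             (Z.of_nat L * B ^ Z.of_nat k) L k g P_le_B); auto using Z.le_refl. intro; apply indb_nonneg.
  - apply Rmult_le_compat_l; [apply pow_le, pos_INR|].
    apply congruence_count; auto. lia.
Qed.

(* Mean square of G over the products of s-tuples: each w <= B^s is hit at most D^s
   times, and [1, B^s] is contained in m complete periods modulo q. *)
Lemma mean_square_bound :
  sumR (map (fun y => twisted_sum q As (prodZ y) ^ 2) (tuples P s)) <=
  INR D ^ s * (INR (m * Z.to_nat q) * collisions q As).
Proof.
  destruct (pow_B_bounds s) as [HBs HBsN].
  set (g := fun w => twisted_sum q As w ^ 2).
  apply Rle_trans with (INR D ^ s * sumR (map g (rng (Z.to_nat (B ^ Z.of_nat s))))).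
  - apply (sum_over_products P P_ge2 (N ^ D) D P_few_divisors B (B ^ Z.of_nat s) s g P_le_B);
      auto using Z.le_refl.
    + apply Rle_trans with (N ^ s); auto. apply Rle_pow; [lra|]. unfold D. lia.
    + intro; apply pow2_ge_0.
  - apply Rmult_le_compat_l; [apply pow_le, pos_INR|].
    eapply Rle_trans; [|apply mean_square_complete_periods; auto using As_unit].
    apply sum_rng_mono; [intro; apply pow2_ge_0|].
    pose proof (Z.div_pos (B ^ Z.of_nat s) q ltac:(lia) ltac:(lia)).
    unfold m. rewrite <- Z2Nat.inj_mul by lia.
    apply Z2Nat.inj_le; [lia|lia|].
    pose proof (Z.div_mod (B ^ Z.of_nat s) q ltac:(lia)).
    pose proof (Z.mod_pos_bound (B ^ Z.of_nat s) q ltac:(lia)). nia.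
Qed.

Lemma typeII_square_bound :
  sumR (map (fun y => twisted_sum q As (prodZ y)) (tuples P s)) ^ 2 <=
  INR (length (tuples P s)) *
  (INR D ^ s * (INR (m * Z.to_nat q) * (INR (length As) *
   (INR D ^ k * (IZR (Z.of_nat L * B ^ Z.of_nat k) / IZR q + 1))))).
Proof.
  eapply Rle_trans; [apply cauchy_schwarz|].
  apply Rmult_le_compat_l; [apply pos_INR|].
  eapply Rle_trans; [apply mean_square_bound|].
  apply Rmult_le_compat_l; [apply pow_le, pos_INR|].
  apply Rmult_le_compat_l; [apply pos_INR|]. apply collisions_bound.
Qed.

Lemma typeII_estimate :
  sumR (map (fun l => sumR (map (typeII_term u v a q l) (tuples P (k + s)))) (seq 1 L))
  <= 2 * 2 ^ (k + s + k) * INR (k + s) ^ (k + s) *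
     Rmax (INR L * Rpower N (INR (k + s) / 2 + INR k / 2)) (INR L * N ^ (k + s) / sqrt (IZR q)).
Proof.
  rewrite typeII_identity.
  destruct (pow_B_bounds s) as [HBs HBsN]. destruct (pow_B_bounds k) as [HBk HBkN].
  set (A := INR L * Rpower N (INR (k + s) / 2 + INR k / 2)).
  set (Bq := INR L * N ^ (k + s) / sqrt (IZR q)).
  assert (HD : 1 <= INR D) by (apply (le_INR 1); unfold D; lia).
  assert (HA : 0 <= A)
    by (apply Rmult_le_pos; [apply pos_INR|unfold Rpower; left; apply exp_pos]).
  apply Rle_trans with (2 * INR D ^ (k + s) * Rmax A Bq).
  - apply sqrt_of_square_bound; auto.
    + apply pow_R1_Rle; lra.
    + unfold Bq, Rdiv. apply Rmult_le_pos; [apply Rmult_le_pos; [apply pos_INR|apply pow_le; lra]|].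
      left. apply Rinv_0_lt_compat, sqrt_lt_R0, IZR_lt. lia.
    + eapply Rle_trans; [apply typeII_square_bound|]. apply typeII_arith; auto using pos_INR.
      *
        split; [apply pos_INR|]. rewrite tuples_length, pow_INR.
        apply pow_incr. split; [apply pos_INR|apply P_length].
      *
        pose proof (Z.div_pos (B ^ Z.of_nat s) q ltac:(lia) ltac:(lia)).
        split; [apply pos_INR|]. unfold m.
        rewrite mult_INR, !INR_IZR_INZ, !Z2Nat.id, <- mult_IZR by lia.
        assert (Hmq : ((B ^ Z.of_nat s / q + 1) * q <= B ^ Z.of_nat s + q)%Z)
          by (pose proof (Z.mul_div_le (B ^ Z.of_nat s) q ltac:(lia)); nia).
        apply IZR_le in Hmq. rewrite plus_IZR in Hmq. lra.
      *
        split; [apply pos_INR|]. unfold As. rewrite coeffs_length, mult_INR, tuples_length, pow_INR.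
        apply Rmult_le_compat_l; [apply pos_INR|].
        apply pow_incr. split; [apply pos_INR|apply P_length].
      * split; [apply IZR_le; lia|]. rewrite mult_IZR, <- INR_IZR_INZ.
        apply Rmult_le_compat_l; [apply pos_INR|auto].
      * split; [apply IZR_le; lia|auto].
      * lra.
  - assert (HM : 0 <= Rmax A Bq) by (eapply Rle_trans; [exact HA|apply Rmax_l]).
    apply Rmult_le_compat_r; [exact HM|]. rewrite Rmult_assoc.
    apply Rmult_le_compat_l; [lra|]. apply dim_power_bound. lia.
Qed.
End TypeII.

Theorem lemma1 :
  exists C : R, 0 < C /\
  forall (a q : Z) (n k L : nat) (N : R),
    (1 <= q)%Z -> Z.gcd a q = 1%Z ->
    (1 <= n)%nat -> (1 <= k)%nat -> (1 <= L)%nat -> 1 <= N ->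
    INR L <= N ^ n ->
    IZR q <= INR L * N ^ k ->
    2 ^ (n + k + 1) < N ->
    sumR (map (fun l : nat =>
              abs_sum_e (map (fun t : list Z =>
                                IZR (Z.of_nat l * prodZ t * a) / IZR q)
                             (tuples (primesP N q) n)))
           (seq 1 L))
    <= C * 2 ^ (n + k) * INR n ^ n *
       Rmax (INR L * Rpower N (INR n / 2 + INR k / 2))
            (INR L * N ^ n / sqrt (IZR q)).
Proof.
  exists 2. split; [lra|].
  intros a q n k L N Hq Hg Hn Hk HL HN HLN HqL H2.
  destruct (primesP_spec N q HN) as [HPnd [HB HP]].
  set (P := primesP N q) in *. set (B := (up N - 1)%Z) in *.
  destruct (le_lt_dec n k) as [Hnk|Hkn].
  - apply trivial_estimate; auto. eapply P_length; eauto.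
  -
    destruct (Nat.le_exists_sub k n) as [s [Hs _]]; [lia|].
    rewrite Nat.add_comm in Hs. subst n.
    set (theta := fun (l : nat) (t : list Z) => IZR (Z.of_nat l * prodZ t * a) / IZR q).
    set (u := fun l => dual_re (map (theta l) (tuples P (k + s)))).
    set (v := fun l => dual_im (map (theta l) (tuples P (k + s)))).
    rewrite (sumR_ext _ (fun l => sumR (map (typeII_term u v a q l) (tuples P (k + s))))).
    + apply typeII_estimate with (B := B); auto. intro l. apply abs_sum_e_dual.
    + intros l _. rewrite (proj1 (abs_sum_e_dual _)), map_map. reflexivity.
Qed.
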